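(* Let $L<U$ be integers and let $M$ be a counting query which, for every dataset $D$, outputs an integer $M(D)\in\{L,L+1,\dots,U\}$, and which has $\ell_1$-sensitivity $\Delta$ (a positive integer), i.e. $|M(D)-M(D')|\le\Delta$ for all neighboring datasets $D\sim D'$. Let $\epsilon>0$ and let $\epsilon'>0$ be a solution of $\epsilon'+\log g(\epsilon')=\epsilon$, where $$g(\epsilon')=\frac{1+\alpha'-(\alpha')^{d+1}-(\alpha')^{U-L+1-d}}{1-(\alpha')^{U-L+1}},\qquad d=\min\Big\{\Delta,\Big\lceil\tfrac{U-L}{2}\Big\rceil\Big\},\qquad \alpha'=e^{-\epsilon'/\Delta}.$$ The renormalized geometric mechanism outputs $\widetilde M_{\mathrm{RGM}}(D)=M(D)+\delta$, where $\delta$ is drawn from $$\Pr(\delta=k)=\frac{e^{-|k|\epsilon'/\Delta}}{\sum_{l=L-M(D)}^{U-M(D)}e^{-|l|\epsilon'/\Delta}},\qquad k=L-M(D),\,L-M(D)+1,\dots,U-M(D).$$ Then the renormalized geometric mechanism satisfies $\epsilon$-differential privacy.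
   Context: Datasets $D,D'$ with the same number $n$ of individuals are neighboring ($D\sim D'$) if they differ by substitution of a single individual's data. A randomized algorithm $\mathcal{A}$ satisfies $\epsilon$-differential privacy if for all neighboring $D,D'$ and every measurable set $S$ in its range, $\Pr(\mathcal{A}(D)\in S)\le e^{\epsilon}\Pr(\mathcal{A}(D')\in S)$. The $\ell_1$-sensitivity of $M$ is $\Delta(M)=\max_{D\sim D'}|M(D)-M(D')|$. *)

From Stdlib Require Import Reals ZArith List Classical ClassicalEpsilon.
Open Scope R_scope.

Definition Dataset (X : Type) (n : nat) := {l : list X | length l = n}.

(* Neighboring: same number n of individuals, differ by substitution of
   (at most) a single individual's data. *)
Definition neighboring {X : Type} {n : nat} (D D' : Dataset X n) : Prop :=
  exists i : nat, forall j : nat, j <> i ->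
    nth_error (proj1_sig D) j = nth_error (proj1_sig D') j.

(* Sum of f k over the integers k = a, a+1, ..., b (assumes a <= b). *)
Definition zsum (a b : Z) (f : Z -> R) : R :=
  sum_f_R0 (fun i => f (a + Z.of_nat i)%Z) (Z.to_nat (b - a)).

(* d = min { Delta, ceil((U-L)/2) };  for U - L >= 0, ceil((U-L)/2) = (U-L+1) div 2. *)
Definition rgm_d (L U Delta : Z) : Z := Z.min Delta ((U - L + 1) / 2)%Z.

Definition rgm_g (L U Delta : Z) (eps' : R) : R :=
  let a := exp (- eps' / IZR Delta) in
  let d := rgm_d L U Delta in
  (1 + a - a ^ (Z.to_nat (d + 1)) - a ^ (Z.to_nat (U - L + 1 - d)))
  / (1 - a ^ (Z.to_nat (U - L + 1))).

Definition rgm_noise_pmf (L U Delta : Z) (eps' : R) (m k : Z) : R :=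
  exp (- IZR (Z.abs k) * eps' / IZR Delta)
  / zsum (L - m) (U - m) (fun l => exp (- IZR (Z.abs l) * eps' / IZR Delta)).

(* Pr( M(D) + delta \in S ) where M(D) = m; S an arbitrary set of integers
   (every subset of the discrete output space is measurable). *)
Definition rgm_prob (L U Delta : Z) (eps' : R) (m : Z) (S : Z -> Prop) : R :=
  zsum (L - m) (U - m) (fun k =>
    if excluded_middle_informative (S (m + k)%Z)
    then rgm_noise_pmf L U Delta eps' m k else 0).

From Stdlib Require Import Reals ZArith Lra Lia ClassicalEpsilon.
Open Scope R_scope.

(* Write a = exp (-eps'/Delta), N = U - L and W(q) = 1 + a - a^(q+1) - a^(N-q+1).
   When M(D) = L + p, the normaliser of the noise is the two-sided geometric sum
   sum_{l=-p}^{N-p} a^|l| = W(p) / (1 - a), and g(eps') = W(d) / W(0).  For neighbours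
   with M(D) = L + p and M(D') = L + p', every output o has a^|o - M(D)| <= e^eps' a^|o - M(D')|,
   so eps-differential privacy reduces to W(p') W(0) <= W(d) W(p).  With k = |p - p'| <= Delta
   this splits into W(p + k) W(0) <= W(k) W(p), a polynomial inequality in a^p, a^k and
   a^(N-p-k) (used as is, or mirrored by q |-> N - q), and W(k) <= W(d): W is symmetric about
   N/2 and increases towards it, and d = min(Delta, ceil(N/2)) is at least as close to N/2 as k. *)

Lemma zsum_telescope (lo hi : Z) (phi : Z -> R) : (lo <= hi)%Z ->
  zsum lo hi (fun l => phi (l + 1)%Z - phi l) = phi (hi + 1)%Z - phi lo.
Proof.
  intros Hlohi. unfold zsum.
  assert (Hpartial : forall n,
    sum_f_R0 (fun i => phi (lo + Z.of_nat i + 1)%Z - phi (lo + Z.of_nat i)%Z) n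
    = phi (lo + Z.of_nat n + 1)%Z - phi lo).
  { induction n as [|n IH].
    - cbn [sum_f_R0]. change (Z.of_nat 0) with 0%Z. rewrite !Z.add_0_r. reflexivity.
    - rewrite tech5, IH, Nat2Z.inj_succ.
      replace (lo + Z.succ (Z.of_nat n))%Z with (lo + Z.of_nat n + 1)%Z by lia. ring. }
  rewrite Hpartial, Z2Nat.id by lia. do 3 f_equal. ring.
Qed.

Section Decay.

Variables e D : R.
Hypotheses (e_pos : 0 < e) (D_pos : 0 < D).

Definition decay (x : R) : R := exp (- x * e / D).

Lemma decay_add x y : decay x * decay y = decay (x + y).
Proof. unfold decay. rewrite <- exp_plus. f_equal. unfold Rdiv. ring. Qed.

Lemma decay_succ x : decay (x + 1) = decay 1 * decay x.
Proof. rewrite decay_add, Rplus_comm. reflexivity. Qed.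

Lemma decay_0 : decay 0 = 1.
Proof. unfold decay. rewrite <- exp_0. f_equal. unfold Rdiv. ring. Qed.

Lemma exp_decay_1 : exp (- e / D) = decay 1.
Proof. unfold decay. f_equal. unfold Rdiv. ring. Qed.

Lemma decay_neg_scale : decay (- D) = exp e.
Proof. unfold decay. f_equal. field. lra. Qed.

Lemma decay_pos x : 0 < decay x.
Proof. apply exp_pos. Qed.

Lemma decay_lt x y : x < y -> decay y < decay x.
Proof.
  intros Hxy. apply exp_increasing. unfold Rdiv.
  assert (0 < e * / D) by (apply Rmult_lt_0_compat; [lra | apply Rinv_0_lt_compat; lra]).
  nra.
Qed.

Lemma decay_le x y : x <= y -> decay y <= decay x.
Proof.
  intros [Hxy | ->]; [left; apply decay_lt; exact Hxy | right; reflexivity].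
Qed.

Lemma decay_le_1 x : 0 <= x -> decay x <= 1.
Proof. intros Hx. rewrite <- decay_0. apply decay_le, Hx. Qed.

Lemma decay_ge_1 x : x <= 0 -> 1 <= decay x.
Proof. intros Hx. rewrite <- decay_0. apply decay_le, Hx. Qed.

Lemma decay_lt_1 x : 0 < x -> decay x < 1.
Proof. intros Hx. rewrite <- decay_0. apply decay_lt, Hx. Qed.

Lemma decay_pow n : decay 1 ^ n = decay (INR n).
Proof.
  induction n as [|n IH]; simpl pow.
  - symmetry. apply decay_0.
  - rewrite IH, decay_add, S_INR, Rplus_comm. reflexivity.
Qed.

Lemma decay_pow_Z z : (0 <= z)%Z -> decay 1 ^ Z.to_nat z = decay (IZR z).
Proof. intros Hz. rewrite decay_pow, INR_IZR_INZ, Z2Nat.id by exact Hz. reflexivity. Qed.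

Definition decay_potential (l : Z) : R :=
  if (l <=? 0)%Z then decay (1 - IZR l) else 1 + decay 1 - decay (IZR l).

Lemma decay_potential_step l :
  decay_potential (l + 1) - decay_potential l = (1 - decay 1) * decay (IZR (Z.abs l)).
Proof.
  unfold decay_potential. rewrite plus_IZR.
  destruct (Z.leb_spec (l + 1) 0) as [Hl1 | Hl1], (Z.leb_spec l 0) as [Hl | Hl]; try lia.
  - rewrite Z.abs_neq, opp_IZR by lia.
    replace (1 - (IZR l + 1)) with (- IZR l) by ring.
    replace (1 - IZR l) with (1 + - IZR l) by ring.
    rewrite <- decay_add. ring.
  - replace l with 0%Z by lia. change (Z.abs 0) with 0%Z.
    rewrite Rplus_0_l, Rminus_0_r, decay_0. ring.
  - rewrite Z.abs_eq by lia. rewrite Rplus_comm, <- decay_add. ring.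
Qed.

Lemma zsum_decay_abs lo hi : (lo <= 0 <= hi)%Z ->
  (1 - decay 1) * zsum lo hi (fun l => decay (IZR (Z.abs l)))
  = 1 + decay 1 - decay (1 - IZR lo) - decay (IZR hi + 1).
Proof.
  intros Hlohi.
  transitivity (zsum lo hi (fun l => decay_potential (l + 1) - decay_potential l)).
  { unfold zsum. rewrite scal_sum. apply sum_eq. intros i _.
    rewrite decay_potential_step. ring. }
  rewrite zsum_telescope by lia. unfold decay_potential.
  destruct (Z.leb_spec (hi + 1) 0), (Z.leb_spec lo 0); try lia.
  rewrite plus_IZR. ring.
Qed.

Definition window_mass (N q : R) : R := 1 + decay 1 - decay (q + 1) - decay (N - q + 1).

Lemma window_mass_sym N q : window_mass N (N - q) = window_mass N q.
Proof. unfold window_mass. replace (N - (N - q)) with q by ring. ring. Qed.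

Lemma window_mass_pos N q : 0 <= q <= N -> 0 < window_mass N q.
Proof.
  intros Hq. unfold window_mass.
  rewrite !decay_succ.
  pose proof (decay_lt_1 1 Rlt_0_1). pose proof (decay_pos 1).
  pose proof (decay_le_1 q ltac:(lra)). pose proof (decay_le_1 (N - q) ltac:(lra)).
  nra.
Qed.

Lemma window_mass_shift_le N p k : 0 <= p -> 0 <= k -> p + k <= N ->
  window_mass N (p + k) * window_mass N 0 <= window_mass N k * window_mass N p.
Proof.
  intros Hp Hk Hpk. unfold window_mass.
  replace (decay (p + k + 1)) with (decay 1 * decay p * decay k)
    by (rewrite !decay_add; f_equal; ring).
  replace (decay (N - (p + k) + 1)) with (decay 1 * decay (N - p - k))
    by (rewrite !decay_add; f_equal; ring).
  rewrite Rplus_0_l, Rminus_0_r.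
  replace (decay (N + 1)) with (decay 1 * decay p * decay k * decay (N - p - k))
    by (rewrite !decay_add; f_equal; ring).
  replace (decay (k + 1)) with (decay 1 * decay k)
    by (rewrite !decay_add; f_equal; ring).
  replace (decay (N - k + 1)) with (decay 1 * decay p * decay (N - p - k))
    by (rewrite !decay_add; f_equal; ring).
  replace (decay (p + 1)) with (decay 1 * decay p)
    by (rewrite !decay_add; f_equal; ring).
  replace (decay (N - p + 1)) with (decay 1 * decay k * decay (N - p - k))
    by (rewrite !decay_add; f_equal; ring).
  set (a := decay 1). set (x := decay p). set (y := decay k). set (u := decay (N - p - k)).
  assert (Ha : 0 < a < 1) by (split; [apply decay_pos | apply decay_lt_1; lra]).
  assert (Hx : 0 < x <= 1) by (split; [apply decay_pos | apply decay_le_1; lra]).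
  assert (Hy : 0 < y <= 1) by (split; [apply decay_pos | apply decay_le_1; lra]).
  assert (Hu : 0 < u <= 1) by (split; [apply decay_pos | apply decay_le_1; lra]).
  (* The difference factors as a (1 - x) (1 - y) (1 + a + u - a u x - a u y - a u x y),
     and a u x <= 1, a u y <= a, a u x y <= u. *)
  assert (Hbound : a * u * x + a * u * y + a * u * x * y <= 1 + a + u).
  { assert (a * u <= 1) by nra. assert (u * y <= 1) by nra. assert (x * y <= 1) by nra.
    assert (a * u * x <= 1) by nra. assert (a * (u * y) <= a) by nra.
    assert (a * (x * y) <= 1) by nra. assert (u * (a * (x * y)) <= u) by nra. nra. }
  assert (0 <= a * ((1 - x) * (1 - y)) * (1 + a + u - a * u * x - a * u * y - a * u * x * y)).
  { apply Rmult_le_pos; [apply Rmult_le_pos|]; nra. }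
  nra.
Qed.

Lemma window_mass_le N k d : (k <= d /\ k + d <= N) \/ (d <= k /\ N <= k + d) ->
  window_mass N k <= window_mass N d.
Proof.
  intros Hkd. unfold window_mass.
  replace (decay (k + 1)) with (decay 1 * decay k)
    by (rewrite !decay_add; f_equal; ring).
  replace (decay (d + 1)) with (decay 1 * decay d)
    by (rewrite !decay_add; f_equal; ring).
  replace (decay (N - k + 1)) with (decay 1 * decay (N - k - d) * decay d)
    by (rewrite !decay_add; f_equal; ring).
  replace (decay (N - d + 1)) with (decay 1 * decay (N - k - d) * decay k)
    by (rewrite !decay_add; f_equal; ring).
  set (a := decay 1). set (x := decay k). set (y := decay d). set (u := decay (N - k - d)).
  assert (0 < a) by apply decay_pos.
  (* window_mass N d - window_mass N k = a (x - y) (1 - u). *)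
  assert (0 <= (x - y) * (1 - u)).
  { destruct Hkd as [[Hk HN] | [Hk HN]].
    - apply Rmult_le_pos.
      + assert (y <= x) by (apply decay_le; lra). lra.
      + assert (u <= 1) by (apply decay_le_1; lra). lra.
    - assert (x <= y) by (apply decay_le; lra).
      assert (1 <= u) by (apply decay_ge_1; lra). nra. }
  nra.
Qed.

Lemma window_mass_dist_le N p p' : 0 <= p <= N -> 0 <= p' <= N ->
  window_mass N p' * window_mass N 0 <= window_mass N (Rabs (p - p')) * window_mass N p.
Proof.
  intros Hp Hp'. destruct (Rle_dec p p') as [Hle | Hgt].
  - rewrite Rabs_minus_sym, Rabs_right by lra.
    replace p' with (p + (p' - p)) at 1 by ring.
    apply window_mass_shift_le; lra.
  - rewrite Rabs_right by lra.
    rewrite <- (window_mass_sym N p'), <- (window_mass_sym N p).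
    replace (N - p') with (N - p + (p - p')) by ring.
    apply window_mass_shift_le; lra.
Qed.

End Decay.

Lemma rgm_d_bounds L U Delta : (L < U)%Z -> (0 < Delta)%Z ->
  (0 <= rgm_d L U Delta <= U - L)%Z.
Proof. intros. unfold rgm_d. Z.div_mod_to_equations. lia. Qed.

Lemma rgm_d_centered L U Delta k : (L < U)%Z -> (0 <= k <= Delta)%Z -> (k <= U - L)%Z ->
  let d := rgm_d L U Delta in
  (k <= d /\ k + d <= U - L)%Z \/ (d <= k /\ U - L <= k + d)%Z.
Proof. intros. unfold d, rgm_d. Z.div_mod_to_equations. lia. Qed.

Section Mechanism.

Variables (L U Delta : Z) (eps' : R).
Hypotheses (HLU : (L < U)%Z) (HDelta : (0 < Delta)%Z) (Heps' : 0 < eps').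

Local Notation decay := (decay eps' (IZR Delta)).
Local Notation W := (window_mass eps' (IZR Delta) (IZR (U - L))).

Let HD : 0 < IZR Delta.
Proof. apply IZR_lt, HDelta. Qed.

Lemma rgm_window_mass_pos q : 0 <= q <= IZR (U - L) -> 0 < W q.
Proof. apply window_mass_pos; [exact Heps' | exact HD]. Qed.

Lemma rgm_noise_pmf_window m k : (L <= m <= U)%Z ->
  rgm_noise_pmf L U Delta eps' m k = (1 - decay 1) * decay (IZR (Z.abs k)) / W (IZR (m - L)).
Proof.
  intros Hm. unfold rgm_noise_pmf.
  change (fun l => exp (- IZR (Z.abs l) * eps' / IZR Delta))
    with (fun l => decay (IZR (Z.abs l))).
  change (exp (- IZR (Z.abs k) * eps' / IZR Delta)) with (decay (IZR (Z.abs k))).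
  assert (Hmass := zsum_decay_abs eps' (IZR Delta) (L - m) (U - m) ltac:(lia)).
  replace (1 - IZR (L - m)) with (IZR (m - L) + 1) in Hmass by (rewrite !minus_IZR; ring).
  replace (IZR (U - m)) with (IZR (U - L) - IZR (m - L)) in Hmass by (rewrite !minus_IZR; ring).
  fold (W (IZR (m - L))) in Hmass.
  assert (0 < W (IZR (m - L))) by (apply rgm_window_mass_pos; split; apply IZR_le; lia).
  assert (decay 1 < 1) by (apply decay_lt_1; [exact Heps' | exact HD | lra]).
  rewrite <- Hmass. field. split; [|lra].
  intros Hzero. rewrite Hzero, Rmult_0_r in Hmass. lra.
Qed.

Lemma rgm_g_window :
  rgm_g L U Delta eps' = W (IZR (rgm_d L U Delta)) / W 0.
Proof.
  pose proof (rgm_d_bounds L U Delta HLU HDelta) as Hd.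
  unfold rgm_g, window_mass; cbv zeta.
  rewrite exp_decay_1.
  rewrite !decay_pow_Z by lia.
  rewrite Rplus_0_l, Rminus_0_r, !plus_IZR.
  replace (IZR (U - L + 1 - rgm_d L U Delta)) with (IZR (U - L) - IZR (rgm_d L U Delta) + 1)
    by (rewrite !minus_IZR, plus_IZR, minus_IZR; ring).
  f_equal. ring.
Qed.

Lemma rgm_exp_budget :
  exp (eps' + ln (rgm_g L U Delta eps'))
  = decay (- IZR Delta) * (W (IZR (rgm_d L U Delta)) / W 0).
Proof.
  pose proof (rgm_d_bounds L U Delta HLU HDelta) as Hd.
  assert (Hg : 0 < rgm_g L U Delta eps').
  { rewrite rgm_g_window. apply Rdiv_lt_0_compat; apply rgm_window_mass_pos.
    - split; apply IZR_le; lia.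
    - split; [lra | apply IZR_le; lia]. }
  rewrite exp_plus, exp_ln, rgm_g_window, decay_neg_scale by assumption. reflexivity.
Qed.

Lemma rgm_weight_shift_le m m' k k' : (Z.abs (m - m') <= Delta)%Z -> (m + k = m' + k')%Z ->
  decay (IZR (Z.abs k)) <= decay (- IZR Delta) * decay (IZR (Z.abs k')).
Proof.
  intros Hmm' Hkk'. rewrite decay_add.
  apply decay_le; [exact Heps' | exact HD |].
  rewrite <- opp_IZR, <- plus_IZR. apply IZR_le. lia.
Qed.

Lemma rgm_window_ratio_le m m' :
  (L <= m <= U)%Z -> (L <= m' <= U)%Z -> (Z.abs (m - m') <= Delta)%Z ->
  W (IZR (m' - L)) * W 0 <= W (IZR (rgm_d L U Delta)) * W (IZR (m - L)).
Proof.
  intros Hm Hm' Hmm'.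
  apply Rle_trans with (W (Rabs (IZR (m - L) - IZR (m' - L))) * W (IZR (m - L))).
  { apply window_mass_dist_le; [exact Heps' | exact HD | split; apply IZR_le; lia ..]. }
  apply Rmult_le_compat_r; [left; apply rgm_window_mass_pos; split; apply IZR_le; lia |].
  apply window_mass_le; [exact Heps' | exact HD |].
  rewrite <- minus_IZR, <- abs_IZR, <- !plus_IZR.
  destruct (rgm_d_centered L U Delta (Z.abs (m - L - (m' - L))) HLU ltac:(lia) ltac:(lia))
    as [[Hk Hd] | [Hk Hd]]; [left | right]; split; apply IZR_le; assumption.
Qed.

Lemma rgm_noise_pmf_shift_le m m' k k' :
  (L <= m <= U)%Z -> (L <= m' <= U)%Z -> (Z.abs (m - m') <= Delta)%Z -> (m + k = m' + k')%Z ->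
  rgm_noise_pmf L U Delta eps' m k
  <= exp (eps' + ln (rgm_g L U Delta eps')) * rgm_noise_pmf L U Delta eps' m' k'.
Proof.
  intros Hm Hm' Hmm' Hkk'.
  rewrite rgm_exp_budget, !rgm_noise_pmf_window by assumption.
  pose proof (rgm_weight_shift_le m m' k k' Hmm' Hkk') as Hweight.
  pose proof (rgm_window_ratio_le m m' Hm Hm' Hmm') as Hratio.
  assert (0 < W (IZR (m - L))) by (apply rgm_window_mass_pos; split; apply IZR_le; lia).
  assert (0 < W (IZR (m' - L))) by (apply rgm_window_mass_pos; split; apply IZR_le; lia).
  assert (0 < W 0) by (apply rgm_window_mass_pos; split; [lra | apply IZR_le; lia]).
  assert (decay 1 < 1) by (apply decay_lt_1; [exact Heps' | exact HD | lra]).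
  pose proof (decay_pos eps' (IZR Delta) (IZR (Z.abs k))).
  set (a := decay 1) in *. set (w := decay (IZR (Z.abs k))) in *.
  set (w' := decay (IZR (Z.abs k'))) in *. set (B := decay (- IZR Delta)) in *.
  set (P := W (IZR (m - L))) in *. set (P' := W (IZR (m' - L))) in *.
  set (Wd := W (IZR (rgm_d L U Delta))) in *. set (W0 := W 0) in *.
  assert (Hnum : (1 - a) * w * (P' * W0) <= (1 - a) * (B * w') * (Wd * P)).
  { apply Rmult_le_compat; nra. }
  replace ((1 - a) * w / P) with ((1 - a) * w * (P' * W0) / (P * (P' * W0))) by (field; lra).
  replace (B * (Wd / W0) * ((1 - a) * w' / P'))
    with ((1 - a) * (B * w') * (Wd * P) / (P * (P' * W0))) by (field; lra).
  apply Rmult_le_compat_r; [|exact Hnum].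
  left. apply Rinv_0_lt_compat. apply Rmult_lt_0_compat; [|apply Rmult_lt_0_compat]; assumption.
Qed.

Lemma rgm_prob_le m m' (S : Z -> Prop) :
  (L <= m <= U)%Z -> (L <= m' <= U)%Z -> (Z.abs (m - m') <= Delta)%Z ->
  rgm_prob L U Delta eps' m S
  <= exp (eps' + ln (rgm_g L U Delta eps')) * rgm_prob L U Delta eps' m' S.
Proof.
  intros Hm Hm' Hmm'. unfold rgm_prob, zsum.
  replace (U - m - (L - m))%Z with (U - L)%Z by ring.
  replace (U - m' - (L - m'))%Z with (U - L)%Z by ring.
  rewrite scal_sum. apply sum_Rle. intros i _.
  replace (m + (L - m + Z.of_nat i))%Z with (L + Z.of_nat i)%Z by ring.
  replace (m' + (L - m' + Z.of_nat i))%Z with (L + Z.of_nat i)%Z by ring.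
  destruct (excluded_middle_informative (S (L + Z.of_nat i)%Z)); [| lra].
  rewrite Rmult_comm. apply rgm_noise_pmf_shift_le; [assumption .. | ring].
Qed.

End Mechanism.

Theorem theoremS1 (X : Type) (n : nat) (L U Delta : Z) (M : Dataset X n -> Z)
    (eps eps' : R)
    (HLU : (L < U)%Z)
    (HDelta : (0 < Delta)%Z)
    (Hrange : forall D, (L <= M D <= U)%Z)
    (Hsens : forall D D', neighboring D D' -> (Z.abs (M D - M D') <= Delta)%Z)
    (Heps : 0 < eps) (Heps' : 0 < eps')
    (Hsol : eps' + ln (rgm_g L U Delta eps') = eps) :
  forall (D D' : Dataset X n), neighboring D D' ->
  forall S : Z -> Prop,
    rgm_prob L U Delta eps' (M D) S <= exp eps * rgm_prob L U Delta eps' (M D') S.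
Proof.
  intros D D' Hneighbor S. rewrite <- Hsol.
  apply rgm_prob_le; auto.
Qed.
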